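(* For any integer $n\ge4$, the $n$-cycle satisfies $\beta(C_n)=n/2$, whereas its complement satisfies $\beta(\overline{C_n})=n/\lfloor n/2\rfloor$. In both cases $\beta_1=\lceil\beta\rceil$ while $\alpha=\lfloor\beta\rfloor$.
   Context: For an undirected graph $G$ on vertex set $[n]$, consider the index coding problem: a server holds messages $x_1,\dots,x_n\in\Sigma$ ($|\Sigma|>1$), receiver $i$ wants $x_i$ and knows $x_j$ for every neighbor $j$ of $i$. A solution is an encoding $\mathcal{E}:\Sigma^n\to\Sigma_P$ from which each receiver can recover its message given its side information, for all message values. $\beta_t(G)$ is the minimum of $\lceil\log_2|\Sigma_P|\rceil$ over solutions with $|\Sigma|=2^t$; $\beta_1(G)$ is this quantity for $t=1$ and $\beta(G)=\lim_t\beta_t(G)/t=\inf_t\beta_t(G)/t$. $\alpha(G)$ is the independence number and $\overline{C_n}$ is the complement of the $n$-cycle $C_n$. *)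

From HB Require Import structures.
From mathcomp Require Import all_boot all_order all_algebra.
From mathcomp Require Import classical_sets reals.
Set Implicit Arguments. Unset Strict Implicit. Unset Printing Implicit Defensive.
Import Order.TTheory GRing.Theory Num.Theory.

Definition cycle_graph (n : nat) : rel 'I_n :=
  fun i j => (val j == (val i + 1) %% n) || (val i == (val j + 1) %% n).

Definition cocycle_graph (n : nat) : rel 'I_n :=
  fun i j => (i != j) && ~~ cycle_graph i j.

Definition independent (n : nat) (G : rel 'I_n) (S : {set 'I_n}) : bool :=
  [forall i in S, forall j in S, ~~ G i j].
Definition alpha (n : nat) (G : rel 'I_n) : nat :=
  \max_(S : {set 'I_n} | independent G S) #|S|.

Definition msgs (n t : nat) := {ffun 'I_n -> 'I_(2 ^ t)}.

(* E is an index code for G: receiver i recovers x_i from E(x) and x_j for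
   neighbors j, i.e. any two message vectors with the same encoding that agree
   on the neighborhood of i agree at i. *)
Definition is_index_code (n t : nat) (G : rel 'I_n) (T : finType)
    (E : {ffun msgs n t -> T}) : bool :=
  [forall i : 'I_n, forall x : msgs n t, forall y : msgs n t,
     ((E x == E y) && [forall j : 'I_n, G i j ==> (x j == y j)]) ==> (x i == y i)].

(* There is a solution whose code alphabet has at most 2^k symbols,
   i.e. with ceil(log2 |Sigma_P|) <= k. *)
Definition solvable_in (n t : nat) (G : rel 'I_n) (k : nat) : bool :=
  [exists E : {ffun msgs n t -> 'I_(2 ^ k)}, is_index_code G E].

Lemma solvable_in_exists (n t : nat) (G : rel 'I_n) :
  exists k, solvable_in t G k.
Proof.
exists (t * n).
have hc : #|msgs n t| = 2 ^ (t * n).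
  by rewrite card_ffun !card_ord expnM.
apply/existsP; exists [ffun x => cast_ord hc (enum_rank x)].
apply/forallP => i; apply/forallP => x; apply/forallP => y; apply/implyP.
case/andP => /eqP; rewrite !ffunE => /cast_ord_inj/enum_rank_inj -> _.
by [].
Qed.

Definition beta_t (n : nat) (G : rel 'I_n) (t : nat) : nat :=
  ex_minn (solvable_in_exists t G).

(* beta(G) = inf_{t >= 1} beta_t(G) / t  (= lim_t beta_t(G)/t). *)
Definition beta (R : realType) (n : nat) (G : rel 'I_n) : R :=
  inf [set ((beta_t G t)%:R / t%:R)%R | t in [set t : nat | (0 < t)%N]].

From HB Require Import structures.
From mathcomp Require Import all_boot all_order all_algebra.
From mathcomp Require Import reals exp Rstruct.
From mathcomp Require Import zify ring lra.
Set Implicit Arguments. Unset Strict Implicit. Unset Printing Implicit Defensive.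
Import Order.TTheory GRing.Theory Num.Theory.

(* Upper bounds: linear codes whose every code bit is the XOR of message bits
   all but one of which are side information of the receiver of that one
   (clique covers for t = 1; for t = 2 on C_n and t = n/2 on the complement of
   an odd cycle, codes attaining the rates n/2 and n/(n/2)).
   Lower bounds: for a uniform message vector X let h(A) be the entropy of X
   given the code word and the messages on A.  Then h(set0) >= tn - k,
   h(A) >= h(set0) - t|A|, h(A) does not change when A is enlarged by
   receivers whose whole side information lies in A, h is submodular, and
   h(A) = 0 when A decodes everything.  Chaining these along well-chosen vertex
   sets of the odd cycle (resp. its complement) gives tn <= 2k (resp.
   tn <= (n/2) k) for every code; for even n the independence number already
   gives these bounds. *)

Ltac ord_bounds := repeat match goal with
  | i : _ |- _ => lazymatch goal with
      | _ : is_true (nat_of_ord i < _)%N |- _ => fail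
      | _ => have := ltn_ord i; move=> ?
      end
  end.

(* [lia] after recording [i < n] for every ordinal [i : 'I_n] in context. *)
Ltac ord_lia := rewrite ?inE; ord_bounds; lia.

Lemma cycle_graphE n (i j : 'I_n) : cycle_graph i j =
  [|| j == i.+1 :> nat, i == j.+1 :> nat,
      (i == n.-1 :> nat) && (j == 0 :> nat) | (j == n.-1 :> nat) && (i == 0 :> nat)].
Proof.
have succ_mod (a : 'I_n) : ((a + 1) %% n = if a.+1 == n then 0 else a.+1)%N.
  case: eqP => [e|ne]; first by rewrite addn1 e modnn.
  by rewrite modn_small; ord_lia.
rewrite /cycle_graph /= !succ_mod.
by case: (i.+1 =P n) => [ei|ni]; case: (j.+1 =P n) => [ej|nj]; ord_lia.
Qed.

Lemma cocycle_graphE n (i j : 'I_n) :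
  cocycle_graph i j = (i != j :> nat) && ~~ cycle_graph i j.
Proof. by rewrite /cocycle_graph val_eqE. Qed.

Lemma card_le_inj_nat n (A : {set 'I_n}) (f : nat -> nat) c :
  {in A &, forall i j : 'I_n, f i = f j -> i = j :> nat} ->
  {in A, forall i : 'I_n, f i < c}%N ->
  (#|A| <= c)%N.
Proof.
move=> finj fc; rewrite cardE -(size_map (f \o val)) -[c](size_iota 0).
apply: uniq_leq_size.
  rewrite map_inj_in_uniq ?enum_uniq // => i j; rewrite !mem_enum => iA jA e.
  exact/val_inj/finj.
by move=> x /mapP [i]; rewrite mem_enum => iA ->; rewrite mem_iota add0n fc.
Qed.

Lemma odd_halfE n : odd n -> n = (2 * n./2).+1 :> nat.
Proof. by move=> odd_n; rewrite -{1}(odd_double_half n) odd_n -mul2n. Qed.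

Lemma odd_mod2 n : odd n -> (n %% 2 = 1)%N.
Proof. by rewrite modn2 => ->. Qed.

Lemma even_mod2 n : ~~ odd n -> (n %% 2 = 0)%N.
Proof. by rewrite modn2 => /negbTE ->. Qed.

Lemma card_bits t : #|{: {ffun 'I_t -> bool}}| = (2 ^ t)%N.
Proof. by rewrite card_ffun card_bool card_ord. Qed.

Definition bits_of t (x : 'I_(2 ^ t)) : {ffun 'I_t -> bool} :=
  enum_val (cast_ord (esym (card_bits t)) x).

Lemma bits_of_inj t : injective (@bits_of t).
Proof. by move=> x y /enum_val_inj /cast_ord_inj. Qed.

Definition of_bits k (b : {ffun 'I_k -> bool}) : 'I_(2 ^ k) :=
  cast_ord (card_bits k) (enum_rank b).

Lemma of_bits_inj k : injective (@of_bits k).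
Proof. by move=> x y /cast_ord_inj /enum_rank_inj. Qed.

Section XorCode.
Variables (n t k : nat) (G : rel 'I_n) (L : 'I_k -> pred ('I_n * 'I_t)).

Definition xor_code : {ffun msgs n t -> 'I_(2 ^ k)} :=
  [ffun x : msgs n t =>
     of_bits [ffun b => \big[addb/false]_(p | L b p) bits_of (x p.1) p.2]].

Hypothesis xor_decodable : forall v r, exists b, L b (v, r) /\
  forall p, L b p -> p = (v, r) \/ G v p.1.

Lemma xor_code_index_code : is_index_code G xor_code.
Proof.
apply/forallP => v; apply/forallP => x; apply/forallP => y; apply/implyP.
case/andP => /eqP; rewrite !ffunE => /of_bits_inj exy /forallP xyN.
apply/eqP/bits_of_inj/ffunP => r; have [b [Lb Lb_side]] := xor_decodable v r.
move: exy => /(congr1 (fun f : {ffun 'I_k -> bool} => f b)); rewrite !ffunE.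
rewrite (bigD1 (v, r)) //= [in RHS](bigD1 (v, r)) //=.
under [in RHS]eq_bigr => p /andP[Lp np].
  have -> : bits_of (y p.1) p.2 = bits_of (x p.1) p.2.
    case: (Lb_side p Lp) => [ep|Gp]; first by rewrite ep eqxx in np.
    by have := xyN p.1; rewrite Gp => /eqP ->.
  over.
by move/addIb.
Qed.

Lemma solvable_in_xor : solvable_in t G k.
Proof. by apply/existsP; exists xor_code; exact: xor_code_index_code. Qed.

End XorCode.

Lemma solvable_in_clique_cover n k (G : rel 'I_n) (c : 'I_n -> 'I_k) :
  (forall i j, c i = c j -> i != j -> G i j) -> solvable_in 1 G k.
Proof.
move=> cliques; apply: (@solvable_in_xor n 1 k G (fun b p => c p.1 == b)).
move=> v r; exists (c v); split=> // -[u s] /eqP /= cuv.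
case: (eqVneq u v) => [->|nuv]; last by right; apply: cliques; rewrite // eq_sym.
by left; rewrite !ord1.
Qed.

(* Code bit [b] is [x_b[0] + x_(b+1)[1]]. *)
Lemma solvable_in_cycle_2 n : (3 <= n)%N -> solvable_in 2 (@cycle_graph n) n.
Proof.
move=> n3; apply: (@solvable_in_xor n 2 n _ (fun b p =>
  ((p.1 == b) && (p.2 == 0 :> nat)) || ((p.1 == ordS b) && (p.2 == 1 :> nat)))).
have cycle_ordS (w : 'I_n) : cycle_graph w (ordS w).
  by rewrite /cycle_graph /= addn1 eqxx.
move=> v r; case: (eqVneq (r : nat) 0) => [r0|r1].
  exists v; split=> [|[u s] /= /orP[/andP[/eqP -> s0]|/andP[/eqP -> _]]].
  - by rewrite /= eqxx; ord_lia.
  - by left; congr pair; apply: val_inj => /=; ord_lia.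
  - by right; apply: cycle_ordS.
exists (ord_pred v); split=> [|[u s] /= /orP[/andP[/eqP -> _]|/andP[/eqP -> s1]]].
- by rewrite /= ord_predK eqxx; ord_lia.
- by right; have := cycle_ordS (ord_pred v); rewrite ord_predK !cycle_graphE; ord_lia.
- by left; rewrite ord_predK; congr pair; apply: val_inj => /=; ord_lia.
Qed.

Lemma solvable_in_cycle_1 n : solvable_in 1 (@cycle_graph n) (uphalf n).
Proof.
have half_lt (i : 'I_n) : (i./2 < uphalf n)%N.
  by have := ltn_ord i; rewrite uphalfE -!divn2; lia.
apply: (solvable_in_clique_cover (c := fun i => Ordinal (half_lt i))).
move=> i j /(congr1 val) /=; rewrite -!divn2 -val_eqE /= cycle_graphE; ord_lia.
Qed.

Lemma solvable_in_cocycle_even n : ~~ odd n -> solvable_in 1 (@cocycle_graph n) 2.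
Proof.
move=> even_n; have mod2_lt (i : 'I_n) : (i %% 2 < 2)%N by rewrite ltn_pmod.
apply: (solvable_in_clique_cover (c := fun i => Ordinal (mod2_lt i))).
move: (even_mod2 even_n) => n_even i j /(congr1 val) /=.
by rewrite -val_eqE /= cocycle_graphE cycle_graphE; ord_lia.
Qed.

Lemma solvable_in_cocycle_odd n : odd n -> solvable_in 1 (@cocycle_graph n) 3.
Proof.
move=> odd_n.
have cls_lt (i : 'I_n) : ((if i == n.-1 :> nat then 2 else i %% 2) < 3)%N.
  by case: ifP => _; rewrite // ltnS ltnW // ltn_pmod.
apply: (solvable_in_clique_cover (c := fun i => Ordinal (cls_lt i))).
move: (odd_mod2 odd_n) => n_odd i j /(congr1 val) /=.
by rewrite -val_eqE /= cocycle_graphE cycle_graphE; case: ifP; case: ifP; ord_lia.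
Qed.

Lemma modn_lt3 x n : (x < 3 * n)%N ->
  [\/ x < n /\ x %% n = x, n <= x < 2 * n /\ x %% n = x - n
    | 2 * n <= x /\ x %% n = x - 2 * n]%N.
Proof.
move=> x_lt; have [lt_xn|le_nx] := ltnP x n.
  by constructor 1; rewrite modn_small.
have [lt_x2n|le_2nx] := ltnP x (2 * n).
  constructor 2; split; first by apply/andP.
  by rewrite -{1}(subnKC le_nx) modnDl modn_small //; lia.
constructor 3; split=> //.
by rewrite -{1}(subnKC le_2nx) mul2n -addnn -addnA !modnDl modn_small //; lia.
Qed.

(* Code bit [b] is the XOR of the bits [x_(b + 2 r)[r]], [r < m], indices
   mod [n = 2 m + 1]: two vertices at even cyclic distance [2, ..., 2m - 2]
   are adjacent in the complement of the cycle. *)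
Lemma solvable_in_cocycle_odd_half n : odd n -> solvable_in n./2 (@cocycle_graph n) n.
Proof.
move=> /odd_halfE en; set m := n./2 in en *.
have n_gt0 : (0 < n)%N by rewrite en.
apply: (@solvable_in_xor n m n _ (fun b p => p.1 == (b + 2 * p.2) %% n :> nat)).
move=> v r; exists (Ordinal (ltn_pmod (v + n - 2 * r) n_gt0)); split.
  rewrite /= modnDml; have -> : (v + n - 2 * r + 2 * r = n + v)%N by ord_lia.
  by rewrite modnDl modn_small.
move=> [u s] /= /eqP; rewrite modnDml => eu.
have : (v + n - 2 * r + 2 * s < 3 * n)%N by ord_lia.
case/modn_lt3 => -[? emod]; rewrite emod in eu.
all: case: (eqVneq (s : nat) r) => [esr|nsr];
  [left; congr pair; apply: val_inj => /=; ord_lia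
  |right; rewrite cocycle_graphE cycle_graphE; ord_lia].
Qed.

Local Open Scope ring_scope.

Lemma ln_ge1Vr (R : realType) (y : R) : 0 < y -> 1 - y^-1 <= ln y.
Proof.
move=> y0; have h : -1 < y^-1 - 1 by rewrite ltrBrDr addNr invr_gt0.
have := le_ln1Dx h; rewrite addrC subrK lnV ?posrE //; lra.
Qed.

Section FiberEntropy.
Variables (R : realType) (Om : finType).

Definition fiber_card (T : eqType) (g : Om -> T) (w : Om) : nat :=
  #|[pred w' | g w' == g w]|.

(* For [w] uniform on [Om], [fiber_entropy g / #|Om|] is the conditional
   entropy of [w] given [g w], in nats. *)
Definition fiber_entropy (T : eqType) (g : Om -> T) : R :=
  \sum_(w : Om) ln (fiber_card g w)%:R.

Lemma fiber_card_gt0 (T : eqType) (g : Om -> T) w : (0 < fiber_card g w)%N.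
Proof. by apply/card_gt0P; exists w; rewrite inE. Qed.

Lemma fiber_cardR_gt0 (T : eqType) (g : Om -> T) w : 0 < (fiber_card g w)%:R :> R.
Proof. by rewrite ltr0n fiber_card_gt0. Qed.

Lemma fiber_cardE (T : eqType) (g : Om -> T) w :
  (fiber_card g w)%:R = \sum_(w' : Om) ((g w' == g w)%:R : R).
Proof.
rewrite /fiber_card -sum1_card natr_sum big_mkcond /=.
by apply: eq_bigr => w' _; rewrite inE; case: (g w' == g w).
Qed.

Lemma fiber_card_eq (T : eqType) (g : Om -> T) w w' :
  g w = g w' -> fiber_card g w = fiber_card g w'.
Proof. by move=> e; rewrite /fiber_card e. Qed.

Lemma sum_fiber_invr (T : eqType) (g : Om -> T) w0 :
  \sum_(w : Om) ((g w == g w0)%:R / (fiber_card g w)%:R) = 1 :> R.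
Proof.
under eq_bigr => w _.
  have -> : (g w == g w0)%:R / (fiber_card g w)%:R =
            (g w == g w0)%:R / (fiber_card g w0)%:R :> R.
    by case: eqP => [/fiber_card_eq ->|_]; rewrite ?mul0r.
  over.
by rewrite -mulr_suml -fiber_cardE divff // gt_eqF // fiber_cardR_gt0.
Qed.

Lemma sum_fiber_card_invr_le (T : finType) (g : Om -> T) :
  \sum_(w : Om) ((fiber_card g w)%:R)^-1 <= #|T|%:R :> R.
Proof.
have -> : \sum_(w : Om) ((fiber_card g w)%:R)^-1 =
   \sum_(w : Om) \sum_(u : T) ((g w == u)%:R / (fiber_card g w)%:R) :> R.
  apply: eq_bigr => w _; rewrite -mulr_suml.
  rewrite (bigD1 (g w)) //= eqxx big1 ?addr0 ?mul1r // => u /negbTE.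
  by rewrite eq_sym => ->.
rewrite exchange_big /= -sum1_card natr_sum ler_sum // => u _.
case: (pickP (fun w => g w == u)) => [w0 /eqP <-|h]; first by rewrite sum_fiber_invr.
by rewrite big1 // => w _; rewrite h mul0r.
Qed.

Lemma fiber_entropy_ge0 (T : eqType) (g : Om -> T) : 0 <= fiber_entropy g.
Proof.
by apply: sumr_ge0 => w _; apply: ln_ge0; rewrite ler1n fiber_card_gt0.
Qed.

Lemma fiber_entropy_inj (T : eqType) (g : Om -> T) :
  injective g -> fiber_entropy g = 0.
Proof.
move=> gi; rewrite /fiber_entropy big1 // => w _.
suff -> : fiber_card g w = 1%N by rewrite ln1.
rewrite /fiber_card -(card1 w); apply: eq_card => w'; rewrite !inE.
by apply/eqP/eqP => [/gi|->].
Qed.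

Lemma fiber_entropy_const (T : eqType) (c : T) :
  fiber_entropy (fun _ : Om => c) = #|Om|%:R * ln #|Om|%:R.
Proof.
rewrite /fiber_entropy /fiber_card.
have -> : #|[pred w' : Om | c == c]| = #|Om|.
  by apply: eq_card => w'; rewrite !inE eqxx.
by rewrite sumr_const mulr_natl.
Qed.

Lemma le_fiber_entropy (T1 T2 : eqType) (g1 : Om -> T1) (g2 : Om -> T2) :
  (forall w w', g1 w = g1 w' -> g2 w = g2 w') ->
  fiber_entropy g1 <= fiber_entropy g2.
Proof.
move=> h; apply: ler_sum => w _.
rewrite ler_ln ?posrE ?fiber_cardR_gt0 // !fiber_cardE; apply: ler_sum => w' _.
by case: eqP => [/h ->|_]; rewrite ?eqxx ?ler0n.
Qed.

(* Gibbs' inequality [ln y >= 1 - 1/y] applied to [y = |fiber| |T| / |Om|],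
   summed with [sum_fiber_card_invr_le]. *)
Lemma fiber_entropy_lb (T : finType) (g : Om -> T) :
  #|Om|%:R * ln #|Om|%:R <= #|Om|%:R * ln #|T|%:R + fiber_entropy g.
Proof.
case: (posnP #|Om|) => [->|Mpos]; first by rewrite !mul0r add0r fiber_entropy_ge0.
have [w0 _] : exists w0 : Om, w0 \in Om by apply/card_gt0P.
have T0 : 0 < #|T|%:R :> R by rewrite ltr0n; apply/card_gt0P; exists (g w0).
set M : R := #|Om|%:R.
have M0 : 0 < M by rewrite ltr0n.
have gibbs : \sum_(w : Om) (1 - M / ((fiber_card g w)%:R * #|T|%:R)) <=
             \sum_(w : Om) ln ((fiber_card g w)%:R * #|T|%:R / M).
  apply: ler_sum => w _.
  have p : 0 < (fiber_card g w)%:R * #|T|%:R / M.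
    by rewrite divr_gt0 // mulr_gt0 // fiber_cardR_gt0.
  by have := ln_ge1Vr p; rewrite invf_div.
have lnE : \sum_(w : Om) ln ((fiber_card g w)%:R * #|T|%:R / M) =
           fiber_entropy g + M * ln #|T|%:R - M * ln M.
  have t w : ln ((fiber_card g w)%:R * #|T|%:R / M) =
             ln (fiber_card g w)%:R + (ln #|T|%:R - ln M).
    have c0 := fiber_cardR_gt0 g w.
    by rewrite ln_div ?posrE ?mulr_gt0 // lnM ?posrE // addrA.
  rewrite (eq_bigr _ (fun w _ => t w)) big_split /= sumr_const -/M.
  rewrite [X in _ + X](_ : _ = M * (ln #|T|%:R - ln M)); last by rewrite mulr_natl.
  by rewrite mulrBr addrA.
have lhsE : \sum_(w : Om) (1 - M / ((fiber_card g w)%:R * #|T|%:R)) =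
            M - M / #|T|%:R * \sum_(w : Om) ((fiber_card g w)%:R)^-1.
  under [in RHS]eq_bigr => w _ do rewrite -[_^-1]mul1r.
  rewrite big_split /= sumr_const sumrN mulr_sumr; congr (_ - _).
  by apply: eq_bigr => w _; rewrite invfM mul1r mulrA mulrAC.
have le_M : M / #|T|%:R * \sum_(w : Om) ((fiber_card g w)%:R)^-1 <= M.
  rewrite -[leRHS]mulr1 -mulrA ler_pM2l // ler_pdivrMl // mulr1.
  exact: sum_fiber_card_invr_le.
lra.
Qed.

Lemma sum_fiber_ratio_le (A B C : eqType)
    (a : Om -> A) (b : Om -> B) (c : Om -> C) :
  (forall w w', a w = a w' -> c w = c w') ->
  (forall w w', b w = b w' -> c w = c w') ->
  \sum_(w : Om) ((fiber_card a w)%:R * (fiber_card b w)%:R /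
        ((fiber_card (fun w => (a w, b w)) w)%:R * (fiber_card c w)%:R))
    <= #|Om|%:R :> R.
Proof.
move=> hac hbc.
set ab := fun w => (a w, b w).
set F := fun w w1 w2 => ((a w1 == a w)%:R * (b w2 == b w)%:R /
                         ((fiber_card ab w)%:R * (fiber_card c w)%:R)) : R.
have t w : (fiber_card a w)%:R * (fiber_card b w)%:R /
            ((fiber_card ab w)%:R * (fiber_card c w)%:R) =
          \sum_(w1 : Om) \sum_(w2 : Om) F w w1 w2.
  rewrite (@fiber_cardE _ a w) (@fiber_cardE _ b w) -mulrA mulr_suml.
  apply: eq_bigr => w1 _; rewrite mulr_suml mulr_sumr; apply: eq_bigr => w2 _.
  by rewrite /F mulrA.
rewrite (eq_bigr _ (fun w _ => t w)) exchange_big /=.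
have inner w1 w2 : \sum_(w : Om) F w w1 w2 <=
                   (c w2 == c w1)%:R / (fiber_card c w1)%:R.
  case: (pickP (fun w => (a w == a w1) && (b w == b w2)))
    => [w0 /andP[/eqP e1 /eqP e2]|hn].
  - have ec : c w2 = c w1 by rewrite -(hbc _ _ e2) (hac _ _ e1).
    have tF w : F w w1 w2 = (ab w == ab w0)%:R / (fiber_card ab w)%:R /
                            (fiber_card c w1)%:R.
      rewrite /F /ab xpair_eqE e1 e2 [a w == a w1]eq_sym [b w == b w2]eq_sym.
      case: (a w1 =P a w) => [ea|na]; case: (b w2 =P b w) => [eb|nb] /=;
        rewrite ?(mul0r, mulr0, mul1r) //.
      by rewrite (fiber_card_eq (hac _ _ (esym ea))) invfM.
    by rewrite (eq_bigr _ (fun w _ => tF w)) -mulr_suml sum_fiber_invr ec eqxx mul1r.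
  - rewrite big1 ?divr_ge0 ?ler0n // => w _.
    rewrite /F; case: (a w1 =P a w) => [ea|na]; case: (b w2 =P b w) => [eb|nb] /=;
      rewrite ?(mul0r, mulr0, mul1r) //.
    by have := hn w; rewrite -ea -eb !eqxx.
have row w1 : \sum_(w2 : Om) (c w2 == c w1)%:R / (fiber_card c w1)%:R = 1 :> R.
  by rewrite -mulr_suml -fiber_cardE divff // gt_eqF // fiber_cardR_gt0.
have -> : #|Om|%:R = \sum_(w1 : Om) \sum_(w2 : Om)
                      (c w2 == c w1)%:R / (fiber_card c w1)%:R :> R.
  by rewrite (eq_bigr _ (fun w1 _ => row w1)) sumr_const.
apply: ler_sum => w1 _; rewrite exchange_big /=.
by apply: ler_sum => w2 _; exact: inner.
Qed.

(* Submodularity of conditional entropy: Gibbs' inequality applied to the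
   ratio bounded by [sum_fiber_ratio_le]. *)
Lemma fiber_entropy_submod (A B C : eqType)
    (a : Om -> A) (b : Om -> B) (c : Om -> C) :
  (forall w w', a w = a w' -> c w = c w') ->
  (forall w w', b w = b w' -> c w = c w') ->
  fiber_entropy a + fiber_entropy b <=
  fiber_entropy (fun w => (a w, b w)) + fiber_entropy c.
Proof.
move=> hac hbc.
set ab := fun w => (a w, b w).
set X := fun w => ((fiber_card a w)%:R * (fiber_card b w)%:R /
        ((fiber_card ab w)%:R * (fiber_card c w)%:R)) : R.
have Xp w : 0 < X w by rewrite /X divr_gt0 // mulr_gt0 // fiber_cardR_gt0.
have gibbs : \sum_(w : Om) (1 - X w) <= \sum_(w : Om) ln ((X w)^-1).
  apply: ler_sum => w _.
  have Xw : 0 < (X w)^-1 by rewrite invr_gt0.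
  by have := ln_ge1Vr Xw; rewrite invrK.
have lnE : \sum_(w : Om) ln ((X w)^-1) =
    fiber_entropy ab + fiber_entropy c - fiber_entropy a - fiber_entropy b.
  rewrite /fiber_entropy -big_split -!sumrB; apply: eq_bigr => w _.
  have := fiber_cardR_gt0 a w; have := fiber_cardR_gt0 b w.
  have := fiber_cardR_gt0 ab w; have := fiber_cardR_gt0 c w => h1 h2 h3 h4.
  by rewrite /X invf_div ln_div ?posrE ?mulr_gt0 // !lnM ?posrE // opprD addrA.
have := sum_fiber_ratio_le hac hbc; rewrite -/ab -/X => sumX.
move: gibbs; rewrite lnE sumrB sumr_const; lra.
Qed.

End FiberEntropy.

Section MessageEntropy.
Variables (R : realType) (n t : nat).
Implicit Types (A : {set 'I_n}) (x y : msgs n t).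

(* Conditional entropy, in bits, of a uniform message vector given [g]. *)
Definition condH (T : eqType) (g : msgs n t -> T) : R :=
  fiber_entropy R g / (#|msgs n t|%:R * ln 2).

Definition restrict (A : {set 'I_n}) (x : msgs n t) :
  {ffun {i : 'I_n | i \in A} -> 'I_(2 ^ t)} := [ffun i => x (val i)].

Lemma restrict_eq A x y : restrict A x = restrict A y <-> {in A, x =1 y}.
Proof.
split=> [e i iA|h].
  have := congr1 (fun f : {ffun {i : 'I_n | i \in A} -> 'I_(2 ^ t)} =>
     f (exist (fun i => i \in A) i iA)) e.
  by rewrite !ffunE.
by apply: eq_ffun => -[i iA]; apply: h.
Qed.

Lemma card_msgs : #|msgs n t| = (2 ^ (t * n))%N.
Proof. by rewrite card_ffun !card_ord expnM. Qed.

Lemma ln2_gt0 : 0 < ln (2 : R).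
Proof. by apply: ln_gt0; rewrite ltr1n. Qed.

Lemma ln_exp2n j : ln ((2 ^ j)%:R : R) = j%:R * ln 2.
Proof. by rewrite natrX lnXn // mulr_natl. Qed.

Lemma card_msgs_ln2_gt0 : 0 < #|msgs n t|%:R * ln (2 : R).
Proof. by rewrite mulr_gt0 ?ln2_gt0 // card_msgs ltr0n expn_gt0. Qed.

Lemma condH_ge0 (T : eqType) (g : msgs n t -> T) : 0 <= condH g.
Proof. by rewrite divr_ge0 ?fiber_entropy_ge0 // ltW // card_msgs_ln2_gt0. Qed.

Lemma condH_inj (T : eqType) (g : msgs n t -> T) : injective g -> condH g = 0.
Proof. by move=> /(fiber_entropy_inj R) e; rewrite /condH e mul0r. Qed.

Lemma condH_const (T : eqType) (c : T) : condH (fun _ => c) = (t * n)%:R.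
Proof.
rewrite /condH fiber_entropy_const [in ln _]card_msgs ln_exp2n mulrCA.
by rewrite mulfK // gt_eqF // card_msgs_ln2_gt0.
Qed.

Lemma le_condH (T1 T2 : eqType) (g1 : msgs n t -> T1) (g2 : msgs n t -> T2) :
  (forall x y, g1 x = g1 y -> g2 x = g2 y) -> condH g1 <= condH g2.
Proof.
by move=> h; rewrite ler_pM2r ?invr_gt0 ?card_msgs_ln2_gt0 // le_fiber_entropy.
Qed.

Lemma condH_submod (A B C : eqType) (a : msgs n t -> A) (b : msgs n t -> B)
    (c : msgs n t -> C) :
  (forall x y, a x = a y -> c x = c y) -> (forall x y, b x = b y -> c x = c y) ->
  condH a + condH b <= condH (fun x => (a x, b x)) + condH c.
Proof.
move=> hac hbc; rewrite -!mulrDl ler_pM2r ?invr_gt0 ?card_msgs_ln2_gt0 //.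
exact: fiber_entropy_submod.
Qed.

Lemma condH_lb (T : finType) (g : msgs n t -> T) j :
  #|T| = (2 ^ j)%N -> (t * n)%:R <= j%:R + condH g.
Proof.
move=> cT; rewrite -(ler_pM2r card_msgs_ln2_gt0) mulrDl.
rewrite divfK ?gt_eqF ?card_msgs_ln2_gt0 //.
have := fiber_entropy_lb R g.
by rewrite cT [in ln _]card_msgs !ln_exp2n !mulrA ![_ * #|_|%:R]mulrC.
Qed.

Lemma condH_restrict_lb A : (t * n)%:R <= (t * #|A|)%:R + condH (restrict A).
Proof.
apply: condH_lb; rewrite card_ffun card_ord card_sig -expnM.
by congr (_ ^ (t * _))%N; apply: eq_card.
Qed.

End MessageEntropy.

(* Given the code word and the messages on [A], the receivers in [B] decode. *)
Definition decodable n (G : rel 'I_n) (A B : {set 'I_n}) : Prop :=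
  forall v, v \in B -> v \notin A -> forall j, G v j -> j \in A.

Section IndexCodeEntropy.
Variables (R : realType) (n t k : nat) (G : rel 'I_n)
  (E : {ffun msgs n t -> 'I_(2 ^ k)}).
Hypothesis codeE : is_index_code G E.
Implicit Types (A B C : {set 'I_n}) (x y : msgs n t).

Local Notation condH := (@condH R n t _).

Definition code_restrict (A : {set 'I_n}) (x : msgs n t) := (E x, restrict A x).

Lemma index_code_decode x y v :
  E x = E y -> (forall j, G v j -> x j = y j) -> x v = y v.
Proof.
move=> exy hN; move: codeE => /forallP /(_ v) /forallP /(_ x) /forallP /(_ y).
move=> /implyP H; apply/eqP/H; rewrite exy eqxx /=.
by apply/forallP => j; apply/implyP => /hN ->.
Qed.

Lemma code_restrict_eq A x y :
  code_restrict A x = code_restrict A y <-> E x = E y /\ {in A, x =1 y}.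
Proof.
rewrite /code_restrict; split=> [[-> /restrict_eq]|[-> /restrict_eq ->]] //.
Qed.

Lemma code_restrict_decode A B x y :
  decodable G A B -> code_restrict A x = code_restrict A y -> {in B, x =1 y}.
Proof.
move=> dAB /code_restrict_eq [exy eA] v vB.
case: (boolP (v \in A)) => [/eA //|vA].
by apply: index_code_decode => // j /(dAB v vB vA); apply: eA.
Qed.

Lemma code_restrict_inj A :
  decodable G A [set: 'I_n] -> injective (code_restrict A).
Proof.
move=> dA x y /(code_restrict_decode dA) exy.
by apply/ffunP => v; apply: exy; rewrite inE.
Qed.

Lemma le_condH_decodable A B :
  decodable G A B -> condH (code_restrict A) <= condH (code_restrict B).
Proof.
move=> dAB; apply: le_condH => x y exy; apply/code_restrict_eq.
by split; [case: exy | apply: code_restrict_decode exy].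
Qed.

Lemma condH_code_lb : (t * n)%:R <= k%:R + condH E.
Proof. by apply: condH_lb; rewrite card_ord. Qed.

Lemma condH_code_restrict_lb A :
  condH E - (t * #|A|)%:R <= condH (code_restrict A).
Proof.
have := condH_submod R (c := fun _ => tt) (a := E) (b := restrict A)
  (fun _ _ _ => erefl) (fun _ _ _ => erefl).
rewrite condH_const; have := condH_restrict_lb R t A; lra.
Qed.

Lemma condH_code_pair A B C :
  C \subset A -> C \subset B -> decodable G (A :|: B) [set: 'I_n] ->
  condH (code_restrict A) + condH (code_restrict B) <= condH (code_restrict C).
Proof.
move=> /subsetP CA /subsetP CB dAB.
have inj : injective (fun x => (code_restrict A x, code_restrict B x)).
  move=> x y exy2; have /code_restrict_eq [exy eA] := congr1 fst exy2.
  have /code_restrict_eq [_ eB] := congr1 snd exy2.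
  apply: (code_restrict_inj dAB); apply/code_restrict_eq; split=> // v.
  by rewrite inE => /orP[/eA|/eB].
rewrite -[leRHS]add0r -(condH_inj R inj).
by apply: condH_submod => x y /code_restrict_eq [exy e];
  apply/code_restrict_eq; split=> // v vC; apply: e; [apply: CA | apply: CB].
Qed.

Lemma condH_code_decodable_lb A P :
  decodable G A P -> condH E - (t * #|A|)%:R <= condH (code_restrict P).
Proof.
by move=> dAP; apply: le_trans (condH_code_restrict_lb A) (le_condH_decodable dAP).
Qed.

Lemma condH_code_step A P B C :
  decodable G A P -> C \subset B -> C \subset P ->
  decodable G (B :|: P) [set: 'I_n] ->
  condH (code_restrict B) + (condH E - (t * #|A|)%:R) <= condH (code_restrict C).
Proof.
move=> dAP CB CP dBP; apply: le_trans (condH_code_pair CB CP dBP).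
by rewrite lerD2l condH_code_decodable_lb.
Qed.

Lemma condH_code_restrict_ub A Z :
  decodable G (A :|: Z) [set: 'I_n] -> condH (code_restrict A) <= (t * #|Z|)%:R.
Proof.
move=> dAZ; have := condH_code_pair (sub0set A) (sub0set Z) dAZ.
have : condH (code_restrict set0) <= condH E.
  by apply: le_condH => x y /code_restrict_eq [].
have := condH_code_restrict_lb Z; lra.
Qed.

Lemma condH_code_chain (Y : nat -> {set 'I_n}) a m :
  (forall s, (s < m)%N -> exists A P, [/\ decodable G A P, (#|A| <= a)%N,
     Y s.+1 \subset Y s, Y s.+1 \subset P & decodable G (Y s :|: P) [set: 'I_n]]) ->
  condH (code_restrict (Y 0)) + m%:R * (condH E - (t * a)%:R)
    <= condH (code_restrict (Y m)).
Proof.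
elim: m => [|m IHm] steps; first by rewrite mul0r addr0.
have [A [P [dAP cA YY YP dYP]]] := steps m (ltnSn m).
have step := condH_code_step dAP YY YP dYP.
have cA' : (t * #|A|)%:R <= (t * a)%:R :> R by rewrite ler_nat leq_mul2l cA orbT.
have := IHm (fun s lt_sm => steps s (ltnW lt_sm)).
rewrite -natr1 mulrDl mul1r; lra.
Qed.

End IndexCodeEntropy.

Lemma solvable_in_indep_le n t k (G : rel 'I_n) (S : {set 'I_n}) :
  solvable_in t G k -> independent G S -> (t * #|S| <= k)%N.
Proof.
move=> /existsP [E codeE] /forallP indS.
have dS : decodable G (~: S) [set: 'I_n].
  move=> v _; rewrite inE negbK => vS j Gvj; rewrite inE.
  by apply/negP => jS; move: (indS v); rewrite vS => /forallP /(_ j); rewrite jS Gvj.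
have h0 := condH_inj Rdefinitions.R (code_restrict_inj codeE dS).
have h1 := condH_code_restrict_lb Rdefinitions.R E (~: S); rewrite h0 in h1.
have h2 := condH_code_lb Rdefinitions.R E.
have : ((t * n)%:R <= (k + t * #|~: S|)%:R :> Rdefinitions.R)%R.
  by rewrite natrD (le_trans h2) // lerD2l -subr_le0.
rewrite ler_nat cardsCs setCK card_ord; move: (max_card S); rewrite card_ord.
nia.
Qed.

Ltac decodable_lia :=
  let v := fresh "v" in let j := fresh "j" in
  move=> v; rewrite ?inE => ? ? j; rewrite ?cocycle_graphE cycle_graphE ?inE; ord_lia.

Ltac subset_lia := apply/subsetP => ?; ord_lia.

(* With h as in the header: the even vertices A below 2m decode all of P and
   the odd ones B all of Q, so h(P), h(Q) >= h(set0) - t m; by submodularity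
   h(P) + h(Q) <= h(K) <= t, since K and the last vertex 2m decode all. *)
Lemma solvable_in_odd_cycle n t k : odd n -> (5 <= n)%N ->
  solvable_in t (@cycle_graph n) k -> (t * n <= 2 * k)%N.
Proof.
move=> /odd_halfE en n5 /existsP [E codeE]; set m := n./2 in en.
pose A := [set i : 'I_n | (i %% 2 == 0) && (i <= 2 * m - 2)]%N.
pose P := [set i : 'I_n | i <= 2 * m - 2]%N.
pose B := [set i : 'I_n | (i %% 2 == 1) && (i <= 2 * m - 1)]%N.
pose Q := [set i : 'I_n | 1 <= i <= 2 * m - 1]%N.
pose K := [set i : 'I_n | 1 <= i <= 2 * m - 2]%N.
pose Z := [set i : 'I_n | i == 2 * m :> nat]%N.
have dAP : decodable (@cycle_graph n) A P by decodable_lia.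
have dBQ : decodable (@cycle_graph n) B Q by decodable_lia.
have dPQ : decodable (@cycle_graph n) (P :|: Q) [set: 'I_n] by decodable_lia.
have dKZ : decodable (@cycle_graph n) (K :|: Z) [set: 'I_n] by decodable_lia.
have KP : K \subset P by subset_lia.
have KQ : K \subset Q by subset_lia.
have h1 := condH_code_decodable_lb Rdefinitions.R codeE dAP.
have h2 := condH_code_step Rdefinitions.R codeE dBQ KP KQ dPQ.
have h3 := condH_code_restrict_ub Rdefinitions.R codeE dKZ.
have h4 := condH_code_lb Rdefinitions.R E.
have cA : (#|A| <= m)%N.
  by apply: (card_le_inj_nat (f := divn^~ 2)) => [i j|i]; rewrite !inE; ord_lia.
have cB : (#|B| <= m)%N.
  by apply: (card_le_inj_nat (f := divn^~ 2)) => [i j|i]; rewrite !inE; ord_lia.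
have cZ : (#|Z| <= 1)%N.
  by apply: (card_le_inj_nat (f := fun=> 0%N)) => [i j|i]; rewrite !inE; ord_lia.
have : ((2 * (t * n))%:R <= (2 * k + t * (#|A| + #|B| + #|Z|))%:R
          :> Rdefinitions.R)%R.
  by move: h1 h2 h3 h4; clear; rewrite !mulnDr !natrD; lra.
by rewrite ler_nat; nia.
Qed.

(* Peeling the even vertices [0, 2, ..., 2m] off one at a time, each step
   costs at most [t (n - 3)] bits of the code's entropy, while what remains
   (the odd vertices) is decodable from [m - 1] further messages. *)
Lemma solvable_in_odd_cocycle n t k : odd n -> (5 <= n)%N ->
  solvable_in t (@cocycle_graph n) k -> (t * n <= n./2 * k)%N.
Proof.
move=> /odd_halfE en n5 /existsP [E codeE]; set m := n./2 in en *.
pose Y s := [set i : 'I_n | ~~ ((i %% 2 == 0) && (i <= 2 * s))]%N.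
pose P s := [set i : 'I_n | (i != 2 * s :> nat) && (i != (2 * s).+2 :> nat)]%N.
pose A s := [set i : 'I_n |
  [&& i != 2 * s :> nat, i != (2 * s).+1 :> nat & i != (2 * s).+2 :> nat]]%N.
pose Z := [set i : 'I_n | [&& i %% 2 == 0, 2 <= i & i <= 2 * m - 2]]%N.
have steps s : (s < m)%N -> exists A P, [/\ decodable (@cocycle_graph n) A P,
    (#|A| <= n - 3)%N, Y s.+1 \subset Y s, Y s.+1 \subset P &
    decodable (@cocycle_graph n) (Y s :|: P) [set: 'I_n]].
  move=> lt_sm; exists (A s), (P s); split; try by [decodable_lia | subset_lia].
  apply: (card_le_inj_nat (f := fun i => if (i < 2 * s)%N then i else (i - 3)%N)).
    by move=> i j; rewrite !inE; case: ifP; case: ifP; ord_lia.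
  by move=> i; rewrite !inE; case: ifP; ord_lia.
have dZ : decodable (@cocycle_graph n) (Y m :|: Z) [set: 'I_n] by decodable_lia.
have h1 := condH_ge0 Rdefinitions.R (code_restrict E (Y 0)).
have h2 := condH_code_chain Rdefinitions.R codeE steps.
have h3 := condH_code_restrict_ub Rdefinitions.R codeE dZ.
have h4 := condH_code_lb Rdefinitions.R E.
have cZ : (#|Z| <= m - 1)%N.
  apply: (card_le_inj_nat (f := fun i => (i %/ 2 - 1)%N)) => [i j|i];
    by rewrite !inE; ord_lia.
have h4m : m%:R * (t * n)%:R <= m%:R * (k%:R + condH _ E) :> Rdefinitions.R.
  by rewrite ler_wpM2l.
have : ((m * (t * n))%:R <= (m * k + t * #|Z| + m * (t * (n - 3)))%:R
          :> Rdefinitions.R)%R.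
  move: h1 h2 h3 h4m; clear; rewrite !natrD !natrM !mulrDr; lra.
by rewrite ler_nat; nia.
Qed.

Lemma beta_t_le n (G : rel 'I_n) t k : solvable_in t G k -> (beta_t G t <= k)%N.
Proof. by rewrite /beta_t; case: ex_minnP => b _; apply. Qed.

Lemma beta_t_solvable n (G : rel 'I_n) t : solvable_in t G (beta_t G t).
Proof. by rewrite /beta_t; case: ex_minnP. Qed.

Lemma ler_nat_ratio (R : numFieldType) (a b c d : nat) : (0 < b)%N -> (0 < d)%N ->
  (a * d <= c * b)%N -> a%:R / b%:R <= c%:R / d%:R :> R.
Proof.
move=> b_gt0 d_gt0 le_adcb.
by rewrite ler_pdivrMr ?ltr0n // mulrAC ler_pdivlMr ?ltr0n // -!natrM ler_nat.
Qed.

Lemma beta_eq_ratio (R : realType) n (G : rel 'I_n) (a b t0 k0 : nat) :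
  (0 < b)%N -> (0 < t0)%N -> (k0 * b = a * t0)%N -> solvable_in t0 G k0 ->
  (forall t k, (0 < t)%N -> solvable_in t G k -> (t * a <= b * k)%N) ->
  beta R G = a%:R / b%:R.
Proof.
move=> b_gt0 t0_gt0 e_k0 sol0 lb.
have rate_ge t : (0 < t)%N -> a%:R / b%:R <= (beta_t G t)%:R / t%:R :> R.
  move=> t_gt0; apply: ler_nat_ratio => //.
  by rewrite mulnC [X in (_ <= X)%N]mulnC lb ?beta_t_solvable.
have rate_t0 : (beta_t G t0)%:R / t0%:R = a%:R / b%:R :> R.
  apply/eqP; rewrite eq_le rate_ge // andbT ler_nat_ratio //.
  by rewrite (leq_trans (leq_mul (beta_t_le sol0) (leqnn b))) // e_k0 mulnC.
rewrite /beta; set S := (X in inf X); apply/eqP; rewrite eq_le; apply/andP; split.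
  apply: ge_inf; last by exists t0.
  by exists (a%:R / b%:R) => _ [t t_gt0 <-]; apply: rate_ge.
apply: lb_le_inf; first by exists (a%:R / b%:R), t0.
by move=> _ [t t_gt0 <-]; apply: rate_ge.
Qed.

Lemma floor_nat_ratio (R : archiRealFieldType) (a b c : nat) : (0 < b)%N ->
  (c * b <= a < c.+1 * b)%N -> Num.floor (a%:R / b%:R : R) = c%:Z.
Proof.
move=> b_gt0 /andP[lo hi]; apply: floor_def.
have -> : c%:Z + 1 = c.+1%:Z by rewrite -addn1 PoszD.
rewrite !pmulrn ler_pdivlMr ?ltr0n // ltr_pdivrMr ?ltr0n //.
by rewrite -!natrM ler_nat ltr_nat lo hi.
Qed.

Lemma ceil_nat_ratio (R : archiRealFieldType) (a b c : nat) : (0 < b)%N ->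
  (c.-1 * b < a <= c * b)%N -> Num.ceil (a%:R / b%:R : R) = c%:Z.
Proof.
move=> b_gt0 /andP[lo hi]; have c_gt0 : (0 < c)%N by case: c lo hi => //; lia.
apply: ceil_def; have -> : c%:Z - 1 = c.-1%:Z by rewrite -subn1 subzn.
rewrite !pmulrn ltr_pdivlMr ?ltr0n // ler_pdivrMr ?ltr0n //.
by rewrite -!natrM ler_nat ltr_nat lo hi.
Qed.

Lemma independent_le_alpha n (G : rel 'I_n) (S : {set 'I_n}) :
  independent G S -> (#|S| <= alpha G)%N.
Proof. exact: leq_bigmax_cond. Qed.

Lemma solvable_in_alpha_le n t k (G : rel 'I_n) :
  solvable_in t G k -> (t * alpha G <= k)%N.
Proof.
move=> sol; rewrite /alpha; elim/big_ind: _ => [|x y|S indS]; first by rewrite muln0.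
  by rewrite maxnMr geq_max => -> ->.
exact: solvable_in_indep_le sol indS.
Qed.

Lemma cycle_independent_half n :
  exists2 S : {set 'I_n}, independent (@cycle_graph n) S & (n./2 <= #|S|)%N.
Proof.
pose S := [set i : 'I_n | (i %% 2 == 0) && (i < 2 * n./2)]%N.
exists S.
  apply/forallP => i; apply/implyP => iS; apply/forallP => j; apply/implyP => jS.
  by move: iS jS; rewrite cycle_graphE !inE -divn2; ord_lia.
have : (#|~: S| <= n - n./2)%N.
  apply: (card_le_inj_nat (f := divn^~ 2)) => [i j|i];
    by rewrite /= !inE -!divn2; ord_lia.
(* [#|S|] in the statement hides a [reverse_coercion] that [lia] would take
   for a different atom from the [#|S|] of [cardsC]. *)
by have := cardsC S; rewrite card_ord -divn2 /reverse_coercion; lia.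
Qed.

Lemma cocycle_independent_pair n : (2 <= n)%N ->
  exists2 S : {set 'I_n}, independent (@cocycle_graph n) S & (2 <= #|S|)%N.
Proof.
move=> n_ge2; pose S := [set i : 'I_n | i <= 1]%N; exists S.
  apply/forallP => i; apply/implyP => iS; apply/forallP => j; apply/implyP => jS.
  by move: iS jS; rewrite cocycle_graphE cycle_graphE !inE; ord_lia.
have : (#|~: S| <= n - 2)%N.
  apply: (card_le_inj_nat (f := subn^~ 2)) => [i j|i]; rewrite /= !inE; ord_lia.
by have := cardsC S; rewrite card_ord /reverse_coercion; lia.
Qed.

Lemma solvable_in_cycle_lb n t k : (4 <= n)%N ->
  solvable_in t (@cycle_graph n) k -> (t * n <= 2 * k)%N.
Proof.
move=> n_ge4 sol; have [odd_n|even_n] := boolP (odd n).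
  by apply: solvable_in_odd_cycle sol => //; have := odd_mod2 odd_n; lia.
have [S indS card_S] := cycle_independent_half n.
have := solvable_in_indep_le sol indS; have := even_mod2 even_n.
rewrite -divn2 in card_S; nia.
Qed.

Lemma solvable_in_cocycle_lb n t k : (4 <= n)%N ->
  solvable_in t (@cocycle_graph n) k -> (t * n <= n./2 * k)%N.
Proof.
move=> n_ge4 sol; have [odd_n|even_n] := boolP (odd n).
  by apply: solvable_in_odd_cocycle sol => //; have := odd_mod2 odd_n; lia.
have [S indS card_S] := cocycle_independent_pair (ltnW (ltnW n_ge4)).
have := solvable_in_indep_le sol indS; have := even_mod2 even_n.
rewrite -divn2; nia.
Qed.

Section Cycle.
Variables (R : realType) (n : nat).
Hypothesis n_ge4 : (4 <= n)%N.

Lemma beta_cycle : beta R (@cycle_graph n) = n%:R / 2.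
Proof.
apply: (beta_eq_ratio R (t0 := 2) (k0 := n)) => //.
  by apply: solvable_in_cycle_2; lia.
by move=> t k _; apply: solvable_in_cycle_lb.
Qed.

Lemma beta_t1_cycle : beta_t (@cycle_graph n) 1 = uphalf n.
Proof.
apply/eqP; rewrite eqn_leq beta_t_le ?solvable_in_cycle_1 //=.
have := solvable_in_cycle_lb n_ge4 (beta_t_solvable _ 1).
by rewrite uphalfE -divn2; lia.
Qed.

Lemma alpha_cycle : alpha (@cycle_graph n) = n./2.
Proof.
have [S indS card_S] := cycle_independent_half n.
apply/eqP; rewrite eqn_leq (leq_trans card_S) ?independent_le_alpha // andbT.
have := solvable_in_alpha_le (solvable_in_cycle_2 (ltnW n_ge4)).
by rewrite -divn2; lia.
Qed.

End Cycle.

Section Cocycle.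
Variables (R : realType) (n : nat).
Hypothesis n_ge4 : (4 <= n)%N.

Lemma beta_cocycle : beta R (@cocycle_graph n) = n%:R / (n./2)%:R.
Proof.
have half_gt0 : (0 < n./2)%N by rewrite -divn2; lia.
have lb t k (_ : (0 < t)%N) := @solvable_in_cocycle_lb n t k n_ge4.
have [odd_n|even_n] := boolP (odd n).
  exact: (@beta_eq_ratio R _ _ n n./2 n./2 n half_gt0 half_gt0 erefl
           (solvable_in_cocycle_odd_half odd_n) lb).
apply: (beta_eq_ratio R (t0 := 1) (k0 := 2)) lb => //.
  by have := even_mod2 even_n; rewrite -divn2; lia.
exact: solvable_in_cocycle_even.
Qed.

Lemma beta_t1_cocycle : beta_t (@cocycle_graph n) 1 = (if odd n then 3 else 2)%N.
Proof.
have := solvable_in_cocycle_lb n_ge4 (beta_t_solvable _ 1); rewrite -divn2.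
case: ifP => [odd_n|/negbT even_n] lb; apply/eqP; rewrite eqn_leq beta_t_le /=.
- by have := odd_mod2 odd_n; nia.
- exact: solvable_in_cocycle_odd.
- by have := even_mod2 even_n; nia.
- exact: solvable_in_cocycle_even.
Qed.

Lemma alpha_cocycle : alpha (@cocycle_graph n) = 2%N.
Proof.
have [S indS card_S] := cocycle_independent_pair (ltnW (ltnW n_ge4)).
apply/eqP; rewrite eqn_leq (leq_trans card_S) ?independent_le_alpha // andbT.
have [odd_n|even_n] := boolP (odd n).
  have := solvable_in_alpha_le (solvable_in_cocycle_odd_half odd_n).
  by have := odd_mod2 odd_n; rewrite -divn2; nia.
by have := solvable_in_alpha_le (solvable_in_cocycle_even even_n); lia.
Qed.

End Cocycle.

Unset Implicit Arguments.

Theorem theorem5p1 (R : realType) (n : nat) (hn : (4 <= n)%N) :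
  [/\ beta R (@cycle_graph n) = n%:R / 2,
      (beta_t (@cycle_graph n) 1)%:Z = Num.ceil (beta R (@cycle_graph n))
    & (alpha (@cycle_graph n))%:Z = Num.floor (beta R (@cycle_graph n))] /\
  [/\ beta R (@cocycle_graph n) = n%:R / (n./2)%:R,
      (beta_t (@cocycle_graph n) 1)%:Z = Num.ceil (beta R (@cocycle_graph n))
    & (alpha (@cocycle_graph n))%:Z = Num.floor (beta R (@cocycle_graph n))].
Proof.
have half_gt0 : (0 < n./2)%N by rewrite -divn2; lia.
rewrite (beta_cycle R hn) (beta_t1_cycle hn) (alpha_cycle hn).
rewrite (beta_cocycle R hn) (beta_t1_cocycle hn) (alpha_cocycle hn).
split; split=> //; symmetry.
- by apply: ceil_nat_ratio => //; rewrite uphalfE -divn2; lia.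
- by apply: floor_nat_ratio => //; rewrite -divn2; lia.
- by apply: ceil_nat_ratio => //; case: ifP => [/odd_mod2|/negbT/even_mod2];
    rewrite -divn2; lia.
- by apply: floor_nat_ratio => //; case: (boolP (odd n)) => [/odd_mod2|/even_mod2];
    rewrite -divn2; lia.
Qed.
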